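(* Let $g$ be an $n$-variable Boolean function, $b\in\mathbb{F}_2$, and $g_b$ the $(n+1)$-variable function $g_b(X_{n+1},X_n,\ldots,X_1)=(1\oplus X_{n+1})g(X_n,\ldots,X_1)\oplus X_{n+1}(b\oplus g(1\oplus X_n,\ldots,1\oplus X_1))$. If $g$ is $t$-resilient but not $(t+1)$-resilient for some integer $0\le t<n$ with $t\equiv b\pmod 2$, then $g_b$ is $(t+1)$-resilient but not $(t+2)$-resilient. If moreover $g$ is plateaued, then $g_b$ is plateaued and every nonzero value $W_{g_b}^2(\bm{\beta})$ equals $\max_{\bm{\alpha}}W_g^2(\bm{\alpha})=2^{-H_\infty(g)}$.
   Context: Walsh transform: $W_f(\bm{\alpha})=2^{-n}\sum_{\mathbf{x}}(-1)^{f(\mathbf{x})\oplus\langle\mathbf{x},\bm{\alpha}\rangle}$. $f$ is $t$-resilient if $W_f(\bm{\alpha})=0$ whenever the Hamming weight $\mathrm{wt}(\bm{\alpha})\le t$; $f$ is plateaued if $W_f$ takes only values in $\{0,c,-c\}$ for some $c$. $H_\infty(f)=\min_{\bm{\alpha}:W_f^2(\bm{\alpha})\ne0}\log_2(1/W_f^2(\bm{\alpha}))$. *)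

From mathcomp Require Import all_boot all_order all_algebra.
From mathcomp Require Import reals exp.
Set Implicit Arguments. Unset Strict Implicit. Unset Printing Implicit Defensive.
Import Order.TTheory GRing.Theory Num.Theory.
Local Open Scope ring_scope.

(* Points of F_2^n: x : bvec n, with x i the coordinate X_{i+1}. *)
Definition bvec (n : nat) := {ffun 'I_n -> bool}.

Definition boolfun (n : nat) := bvec n -> bool.

Definition dotb n (x a : bvec n) : bool := \big[addb/false]_(i < n) (x i && a i).

Definition wt n (a : bvec n) : nat := #|[set i | a i]|.

Definition walsh (R : realType) n (f : boolfun n) (a : bvec n) : R :=
  (2 ^+ n)^-1 * \sum_(x : bvec n) (-1) ^+ (f x (+) dotb x a).

Definition resilient (R : realType) n (f : boolfun n) (t : nat) : Prop :=
  forall a : bvec n, (wt a <= t)%N -> walsh R f a = 0.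

Definition plateaued (R : realType) n (f : boolfun n) : Prop :=
  exists c : R, forall a : bvec n, walsh R f a \in [:: 0; c; - c].

Definition log2 (R : realType) (x : R) : R := ln x / ln 2.

Definition H_infty (R : realType) n (f : boolfun n) : R :=
  let S := [seq log2 (1 / walsh R f a ^+ 2) | a <- enum [set: bvec n]
             & walsh R f a ^+ 2 != 0] in
  \big[Num.min/head 0 S]_(h <- S) h.

(* max_a W_f(a)^2 (all terms are nonnegative) *)
Definition maxW2 (R : realType) n (f : boolfun n) : R :=
  \big[Num.max/0]_(a : bvec n) walsh R f a ^+ 2.

Definition lowv n (x : bvec n.+1) : bvec n :=
  [ffun i : 'I_n => x (widen_ord (leqnSn n) i)].
Definition topv n (x : bvec n.+1) : bool := x ord_max.
Definition complv n (x : bvec n) : bvec n := [ffun i => ~~ x i].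

Definition gext n (g : boolfun n) (b : bool) : boolfun n.+1 :=
  fun x => ((~~ topv x) && g (lowv x)) (+) (topv x && (b (+) g (complv (lowv x)))).

From Pilot Require Import Defs.
From mathcomp Require Import all_boot all_order all_algebra.
From mathcomp Require Import reals exp.
From mathcomp Require Import ring zify.
Import Order.TTheory GRing.Theory Num.Theory.
Set Implicit Arguments. Unset Strict Implicit. Unset Printing Implicit Defensive.
Local Open Scope ring_scope.

(* Split the Walsh sum of g_b on X_{n+1}; on the half X_{n+1} = 1 substitute
   the complemented lower coordinates, which turns it into the half
   X_{n+1} = 0 times the sign (-1)^(b + wt(beta') + beta_{n+1}).  Hence
   W_{g_b}(beta', c) is W_g(beta') when b + wt(beta') + c is even and 0
   otherwise: the spectrum of g_b is the spectrum of g with every nonzero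
   coefficient of weight w moved to weight w or w + 1 according to the parity
   of b + w.  Since t = b mod 2, the coefficients of g of weight t + 1 move to
   weight t + 2 and nothing lands at weight <= t + 1; the nonzero values, hence
   the plateau, are unchanged. *)

Definition extv n (y : bvec n) (c : bool) : bvec n.+1 :=
  [ffun i => if unlift ord_max i is Some j then y j else c].

Lemma widen_lift_max n (i : 'I_n) : widen_ord (leqnSn n) i = lift ord_max i.
Proof. by apply: val_inj; rewrite /= /bump leqNgt ltn_ord. Qed.

Lemma lowv_ext n (y : bvec n) c : lowv (extv y c) = y.
Proof. by apply/ffunP => i; rewrite !ffunE widen_lift_max liftK. Qed.

Lemma topv_ext n (y : bvec n) c : topv (extv y c) = c.
Proof. by rewrite /topv ffunE unlift_none. Qed.

Lemma extv_low_top n (x : bvec n.+1) : extv (lowv x) (topv x) = x.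
Proof.
apply/ffunP => i; rewrite ffunE; case: unliftP => [j ->|->] //.
by rewrite ffunE widen_lift_max.
Qed.

Lemma big_bvecS (V : nmodType) n (F : bvec n.+1 -> V) :
  \sum_(x : bvec n.+1) F x = \sum_(c : bool) \sum_(y : bvec n) F (extv y c).
Proof.
rewrite pair_big /= (reindex (fun p : bool * bvec n => extv p.2 p.1)) //=.
exists (fun x => (topv x, lowv x)) => [[c y] _|x _] /=.
  by rewrite lowv_ext topv_ext.
by rewrite extv_low_top.
Qed.

Lemma wtE n (a : bvec n) : wt a = (\sum_i (a i : nat))%N.
Proof.
rewrite /wt -sum1_card big_mkcond.
by apply: eq_bigr => i _; rewrite inE; case: (a i).
Qed.

Lemma wt_ext n (y : bvec n) c : wt (extv y c) = (wt y + c)%N.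
Proof.
rewrite !wtE big_ord_recr /= ffunE unlift_none; congr (_ + _)%N.
by apply: eq_bigr => i _; rewrite ffunE widen_lift_max liftK.
Qed.

Lemma dotb_ext n (y a : bvec n) (c d : bool) :
  dotb (extv y c) (extv a d) = dotb y a (+) (c && d).
Proof.
rewrite /dotb big_ord_recr /= !ffunE unlift_none; congr (_ (+) _).
by apply: eq_bigr => i _; rewrite !ffunE widen_lift_max liftK.
Qed.

Lemma complvK n : involutive (@Defs.complv n).
Proof. by move=> z; apply/ffunP => i; rewrite !ffunE negbK. Qed.

Lemma dotb_complv n (z a : bvec n) : dotb (Defs.complv z) a = dotb z a (+) odd (wt a).
Proof.
rewrite wtE (big_morph odd oddD (erefl (odd 0))) /dotb -big_split /=.
by apply: eq_bigr => i _; rewrite ffunE oddb; case: (z i); case: (a i).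
Qed.

Lemma gext_ext n (g : boolfun n) b (y : bvec n) c :
  gext g b (extv y c) = if c then b (+) g (Defs.complv y) else g y.
Proof. by rewrite /gext topv_ext lowv_ext; case: c; rewrite ?addbF. Qed.

Lemma walsh_gext (R : realType) n (g : boolfun n) b (a : bvec n) d :
  walsh R (gext g b) (extv a d) =
  if b (+) odd (wt a) (+) d then 0 else walsh R g a.
Proof.
set p := _ (+) _ (+) _.
set W := \sum_(x : bvec n) (-1) ^+ (g x (+) dotb x a) : R.
have sum_low :
    \sum_(y : bvec n) (-1) ^+ (gext g b (extv y false) (+) dotb (extv y false) (extv a d)) = W.
  by apply: eq_bigr => y _; rewrite gext_ext dotb_ext addbF.
have sum_high :
    \sum_(y : bvec n) (-1) ^+ (gext g b (extv y true) (+) dotb (extv y true) (extv a d))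
    = (-1) ^+ p * W :> R.
  rewrite (reindex_inj (can_inj (@complvK n))) mulr_sumr.
  apply: eq_bigr => z _; rewrite gext_ext dotb_ext complvK dotb_complv -signr_addb.
  congr (_ ^+ _); rewrite /p; clear p.
  by case: (b); case: (g z); case: (dotb z a); case: (odd _); case: (d).
rewrite /walsh big_bvecS big_bool /= sum_low sum_high exprS invfM.
case: (p); first by rewrite expr1 mulN1r addNr mulr0.
by rewrite expr0 mul1r -/W; field; rewrite expf_neq0 // pnatr_eq0.
Qed.

Lemma walsh_gextE (R : realType) n (g : boolfun n) b (be : bvec n.+1) :
  walsh R (gext g b) be =
  if b (+) odd (wt (lowv be)) (+) topv be then 0 else walsh R g (lowv be).
Proof. by rewrite -{1}(extv_low_top be) walsh_gext. Qed.

Section Resilience.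
Variables (R : realType) (n : nat).

Lemma resilient_wt (f : boolfun n) t a :
  resilient R f t -> walsh R f a != 0 -> (t < wt a)%N.
Proof. by move=> rf; apply: contraR; rewrite -leqNgt => /rf ->. Qed.

Lemma not_resilientS (f : boolfun n) t :
  resilient R f t -> ~ resilient R f t.+1 ->
  exists2 a, wt a = t.+1 & walsh R f a != 0.
Proof.
move=> rf nrf; case: (boolP [exists a, (wt a == t.+1) && (walsh R f a != 0)]).
  by case/existsP=> a /andP[/eqP wa wf]; exists a.
move/existsPn=> nwf; case: nrf => a wa; apply/eqP; apply: contraR (nwf a) => wf.
by rewrite wf andbT eqn_leq wa (resilient_wt rf wf).
Qed.

Variables (g : boolfun n) (b : bool) (t : nat).
Hypotheses (tb : odd t = b) (rg : resilient R g t).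

Lemma resilient_gext : resilient R (gext g b) t.+1.
Proof.
move=> be; rewrite -(extv_low_top be) wt_ext walsh_gext.
move: (lowv be) (topv be) => a d wa.
have [->|wg] := eqVneq (walsh R g a) 0; first by case: ifP.
have := resilient_wt rg wg; case: d wa => /= wa wta; first lia.
have -> : wt a = t.+1 by lia.
by rewrite /= -tb addbN addbb.
Qed.

Lemma not_resilient_gext : ~ resilient R g t.+1 -> ~ resilient R (gext g b) t.+2.
Proof.
case/(not_resilientS rg) => a wa wg /(_ (extv a true)).
rewrite wt_ext wa addn1 walsh_gext wa /= -tb addbN addbb => /(_ (leqnn _)).
exact/eqP.
Qed.

End Resilience.

Lemma bigmin_seq_const (R : realDomainType) (S : seq R) L :
  S != [::] -> {in S, forall h, h = L} -> \big[Num.min/head 0 S]_(h <- S) h = L.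
Proof.
case: S => [//|h S] _ SL; rewrite big_seq.
by apply: (big_ind (eq^~ L)) => [|x y -> ->|]; [exact/SL/mem_head | exact: minxx | ].
Qed.

Lemma powR2_Nlog2 (R : realType) (x : R) : 0 < x -> 2 `^ (- log2 (1 / x)) = x.
Proof.
move=> x0; have ln2 : ln (2 : R) != 0 by rewrite gt_eqF // ln_gt0 // ltr1n.
rewrite /powR pnatr_eq0 /= /log2 mulNr divfK // div1r lnV ?posrE //.
by rewrite opprK lnK ?posrE.
Qed.

Section Plateau.
Variables (R : realType) (n : nat) (f : boolfun n).
Hypothesis pf : plateaued R f.

Lemma plateaued_walsh_sqr a : walsh R f a != 0 -> walsh R f a ^+ 2 = maxW2 R f.
Proof.
have [c fc] := pf.
have sqc x : walsh R f x != 0 -> walsh R f x ^+ 2 = c ^+ 2.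
  by move: (fc x); rewrite !inE => /or3P[]/eqP-> //; rewrite ?eqxx ?sqrrN.
move=> wa; rewrite sqc //; apply/le_anti/andP; split.
  by rewrite -(sqc a wa); exact: le_bigmax.
apply: bigmax_le => [|x _]; first exact: sqr_ge0.
by have [->|/sqc->] := eqVneq (walsh R f x) 0; rewrite ?expr2 ?mulr0 ?sqr_ge0.
Qed.

Lemma plateaued_gext b : plateaued R (gext f b).
Proof.
have [c fc] := pf; exists c => be; rewrite walsh_gextE.
by case: ifP => _; [rewrite inE eqxx | exact: fc].
Qed.

Lemma walsh_gext_sqr b be :
  walsh R (gext f b) be ^+ 2 != 0 -> walsh R (gext f b) be ^+ 2 = maxW2 R f.
Proof.
rewrite walsh_gextE; case: ifP => _; first by rewrite expr2 mulr0 eqxx.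
by rewrite sqrf_eq0; exact: plateaued_walsh_sqr.
Qed.

Lemma maxW2_H_infty a : walsh R f a != 0 -> maxW2 R f = 2 `^ (- H_infty R f).
Proof.
move=> wa; have maxW2_gt0 : 0 < maxW2 R f.
  by rewrite -(plateaued_walsh_sqr wa) lt_def sqr_ge0 sqrf_eq0 wa.
rewrite -[LHS](powR2_Nlog2 maxW2_gt0); congr (_ `^ - _); symmetry.
apply: bigmin_seq_const => [|h /mapP[x]]; last first.
  by rewrite mem_filter sqrf_eq0 => /andP[wx _] ->; rewrite plateaued_walsh_sqr.
have aS : log2 (1 / walsh R f a ^+ 2) \in
    [seq log2 (1 / walsh R f x ^+ 2) | x <- enum [set: bvec n] & walsh R f x ^+ 2 != 0].
  by apply: map_f; rewrite mem_filter sqrf_eq0 wa mem_enum in_setT.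
by apply: contraTneq aS => ->.
Qed.

End Plateau.

Theorem mainTheorem7 (R : realType) (n : nat) (g : boolfun n) (b : bool) (t : nat) :
  (t < n)%N -> odd t = b ->
  resilient R g t -> ~ resilient R g t.+1 ->
  (resilient R (gext g b) t.+1 /\ ~ resilient R (gext g b) t.+2) /\
  (plateaued R g ->
     plateaued R (gext g b) /\
     (forall beta : bvec n.+1, walsh R (gext g b) beta ^+ 2 != 0 ->
        walsh R (gext g b) beta ^+ 2 = maxW2 R g) /\
     maxW2 R g = 2 `^ (- H_infty R g)).
Proof.
move=> _ tb rg nrg; split; first by split; [exact: resilient_gext | exact: not_resilient_gext].
move=> pg; have [a _ wa] := not_resilientS rg nrg.
split; first exact: plateaued_gext.
by split; [exact: walsh_gext_sqr | exact: maxW2_H_infty wa].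
Qed.
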